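(* For all integers $m\ge1$, $n,h,r\ge0$ and $0\le s\le n+h$, $$W_{m,r}(n+h,s)=\sum_{k=0}^n\sum_{j=0}^h\binom nk W_{m,r}(h,j)\,W_{m,r}(k,s-j)\,(jm)^{n-k},$$ with the conventions $0^0=1$ and $W_{m,r}(k,i)=0$ if $i<0$ or $i>k$.
   Context: For integers $m\ge1$, $n,k,r\ge0$, $W_{m,r}(n,k)$ denotes the $r$-Whitney number of the second kind, defined by $\sum_{n\ge k}W_{m,r}(n,k)\frac{z^n}{n!}=\frac{e^{rz}}{k!}\left(\frac{e^{mz}-1}{m}\right)^k$ (equivalently $(mx+r)^n=\sum_{k=0}^n m^kW_{m,r}(n,k)\,x(x-1)\cdots(x-k+1)$). *)

From mathcomp Require Import all_boot all_order all_algebra.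
Set Implicit Arguments. Unset Strict Implicit. Unset Printing Implicit Defensive.
Import GRing.Theory Num.Theory.
Local Open Scope ring_scope.

(* Coefficient extraction from the EGF
     e^{rz}/k! ((e^{mz}-1)/m)^k
       = 1/(m^k k!) * sum_{i=0}^k C(k,i) (-1)^(k-i) e^{(mi+r) z},
   so the coefficient of z^n/n! is
     1/(m^k k!) * sum_{i=0}^k (-1)^(k-i) C(k,i) (m i + r)^n.
   (This vanishes automatically for k > n.) *)
Definition W (m r n k : nat) : rat :=
  (\sum_(i < k.+1) (-1) ^+ (k - i) * ('C(k, i))%:R * ((m * i + r)%N%:R) ^+ n)
  / ((m ^ k)%N%:R * (k`!)%:R).

Definition Wz (m r n : nat) (i : int) : rat :=
  match i with
  | Posz k => if (k <= n)%N then W m r n k else 0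
  | Negz _ => 0
  end.


(* [W m r n k * m ^ k * k`!] is the [k]-th forward difference at [0] of
   [y |-> (m y + r) ^ n].  Writing [(m y + r) ^ (n + h)] as
   [(m y + r) ^ h * (m y + r) ^ n], the Leibniz rule for forward differences
   splits [Delta ^ s] into [sum_j C(s, j) Delta ^ j (.) ^ h (0) *
   Delta ^ (s - j) (.) ^ n (j)], and the binomial expansion of
   [(m (j + y) + r) ^ n] in powers of [j m] and [m y + r] rewrites the second
   factor as [sum_k C(n, k) (j m) ^ (n - k) Delta ^ (s - j) (.) ^ k (0)].  The
   coefficient [C(s, j)] cancels against the normalisations, and the terms
   with [j > h] vanish because [Delta ^ j] kills polynomials of degree [< j]. *)
From mathcomp Require Import all_boot all_order all_algebra zify ring.
Import GRing.Theory Num.Theory.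
Local Open Scope ring_scope.

Section FiniteDifferences.
Context {R : comPzRingType}.
Implicit Types f g : nat -> R.

(* The sign [(-1) ^+ (k + i)] equals [(-1) ^+ (k - i)] (see [signr_subn])
   but avoids truncated subtraction. *)
Definition fdiff (k : nat) f (x : nat) : R :=
  \sum_(i < k.+1) (-1) ^+ (k + i) * 'C(k, i)%:R * f (x + i)%N.

Lemma eq_fdiff k f g x : f =1 g -> fdiff k f x = fdiff k g x.
Proof. by move=> fg; apply: eq_bigr => i _; rewrite fg. Qed.

Lemma fdiffD k f g x :
  fdiff k (fun y => f y + g y) x = fdiff k f x + fdiff k g x.
Proof. by rewrite -big_split; apply: eq_bigr => i _; rewrite mulrDr. Qed.

Lemma fdiffB k f g x :
  fdiff k (fun y => f y - g y) x = fdiff k f x - fdiff k g x.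
Proof. by rewrite -sumrB; apply: eq_bigr => i _; rewrite mulrBr. Qed.

Lemma fdiffZ k c f x : fdiff k (fun y => c * f y) x = c * fdiff k f x.
Proof. by rewrite mulr_sumr; apply: eq_bigr => i _; rewrite mulrCA. Qed.

Lemma fdiff_sum (I : Type) (ts : seq I) (P : pred I) (F : I -> nat -> R) k x :
  fdiff k (fun y => \sum_(t <- ts | P t) F t y) x =
  \sum_(t <- ts | P t) fdiff k (F t) x.
Proof. by rewrite exchange_big; apply: eq_bigr => i _; rewrite mulr_sumr. Qed.

Lemma fdiff_shift k f x : fdiff k f x = fdiff k (fun y => f (x + y)%N) 0.
Proof. by apply: eq_bigr => i _; rewrite add0n. Qed.

Lemma fdiff_succ k f x : fdiff k (fun y => f y.+1) x = fdiff k f x.+1.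
Proof. by apply: eq_bigr => i _; rewrite addSn. Qed.

Lemma fdiffSl k f x : fdiff k.+1 f x = fdiff k f x.+1 - fdiff k f x.
Proof.
rewrite /fdiff big_ord_recl /=.
under eq_bigr => i _ do rewrite /bump /= add1n binS natrD mulrDr mulrDl.
rewrite big_split /= addrA addrC; congr (_ + _).
  by apply: eq_bigr => i _; rewrite addSn addnS !exprS !mulN1r opprK addSnnS.
rewrite [in RHS]big_ord_recl big_ord_recr /= (bin_small (ltnSn k)) mulr0 mul0r addr0.
rewrite opprD; congr (_ + _); first by rewrite !addn0 !bin0 exprS mulN1r !mulNr.
rewrite -sumrN; apply: eq_bigr => i _ /=.
by rewrite /bump /= add1n !addnS !addSn !exprS !mulN1r !mulNr !opprK.
Qed.

Lemma fdiffSr k f x : fdiff k.+1 f x = fdiff k (fun y => f y.+1 - f y) x.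
Proof. by rewrite fdiffSl fdiffB fdiff_succ. Qed.

Lemma fdiffM k f g x :
  fdiff k (fun y => f y * g y) x =
  \sum_(j < k.+1) 'C(k, j)%:R * fdiff j f x * fdiff (k - j) g (x + j)%N.
Proof.
elim: k f g x => [|k IH] f g x.
  by rewrite /fdiff !big_ord1 /= !addn0 !bin0 !expr0 !mul1r.
have step y : f y.+1 * g y.+1 - f y * g y =
    (f y.+1 - f y) * g y.+1 + f y * (g y.+1 - g y).
  by rewrite mulrBl mulrBr addrA subrK.
rewrite fdiffSr (eq_fdiff k _ _ x step) fdiffD !IH.
under eq_bigr => j _ do rewrite -fdiffSr fdiff_succ.
under [X in _ + X = _]eq_bigr => j _ do rewrite -fdiffSr.
rewrite [RHS]big_ord_recl /=.
under [X in _ = _ + X]eq_bigr => j _ do rewrite /bump /= add1n binS natrD !mulrDl.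
rewrite big_split /= addrA [RHS]addrC; congr (_ + _).
  by apply: eq_bigr => j _; rewrite subSS addnS.
rewrite big_ord_recl big_ord_recr /= (bin_small (ltnSn k)) !mul0r addr0.
congr (_ + _); first by rewrite !bin0 !subn0.
by apply: eq_bigr => j _; rewrite /bump /= add1n -subSn.
Qed.

End FiniteDifferences.

Section AffinePowers.
Context {R : comPzRingType} (a b : R).

Definition affine_pow (n y : nat) : R := (a * y%:R + b) ^+ n.

Lemma affine_powD n h y : affine_pow (n + h) y = affine_pow h y * affine_pow n y.
Proof. by rewrite /affine_pow exprD mulrC. Qed.

Lemma affine_pow_succ n y :
  affine_pow n y.+1 - affine_pow n y =
  \sum_(i < n) 'C(n, i.+1)%:R * a ^+ i.+1 * affine_pow (n - i.+1) y.
Proof.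
rewrite /affine_pow -addn1 natrD mulrDr mulr1 addrAC exprDn big_ord_recl.
rewrite subn0 expr0 mulr1 bin0 mulr1n addrAC subrr add0r.
by apply: eq_bigr => i _; rewrite lift0 -mulr_natl mulrA mulrAC.
Qed.

Lemma fdiff_affine_pow_small n k x : (n < k)%N -> fdiff k (affine_pow n) x = 0.
Proof.
elim: k n x => [|k IH] n x // n_lt_k1.
rewrite fdiffSr (eq_fdiff _ _ _ x (affine_pow_succ n)) fdiff_sum big1 // => i _.
by rewrite fdiffZ IH ?mulr0 //; move: n_lt_k1 (ltn_ord i); lia.
Qed.

Lemma fdiff_affine_pow_shift t n x :
  fdiff t (affine_pow n) x =
  \sum_(k < n.+1) 'C(n, k)%:R * (a * x%:R) ^+ (n - k) * fdiff t (affine_pow k) 0.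
Proof.
have expand y : affine_pow n (x + y) =
    \sum_(k < n.+1) ('C(n, k)%:R * (a * x%:R) ^+ (n - k)) * affine_pow k y.
  rewrite /affine_pow natrD mulrDr -addrA exprDn.
  by apply: eq_bigr => k _; rewrite -mulr_natl mulrA.
rewrite fdiff_shift (eq_fdiff _ _ _ 0 expand) fdiff_sum.
by apply: eq_bigr => k _; rewrite fdiffZ.
Qed.

End AffinePowers.

Lemma signr_subn (R : pzRingType) (k i : nat) :
  (i <= k)%N -> (-1) ^+ (k - i) = (-1) ^+ (k + i) :> R.
Proof. by move=> ik; rewrite -signr_odd oddB // -oddD signr_odd. Qed.

Lemma sum_ord_vanishing_tail {V : nmodType} (F : nat -> V) {a N : nat} :
  (a <= N)%N -> (forall j, (a <= j)%N -> F j = 0) ->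
  \sum_(j < N) F j = \sum_(j < a) F j.
Proof.
move=> aN F0; rewrite (big_ord_widen _ F aN) [RHS]big_mkcond /=.
by apply: eq_bigr => j _; case: ltnP => // /F0.
Qed.

Lemma expn_fact_split (m : nat) {s j : nat} : (j <= s)%N ->
  (m ^ s * s`! = 'C(s, j) * (m ^ j * j`!) * (m ^ (s - j) * (s - j)`!))%N.
Proof. by move=> js; rewrite -{1}(bin_fact js) -{1}(subnKC js) expnD; ring. Qed.

Lemma W_fdiff m r n k :
  W m r n k = fdiff k (affine_pow m%:R r%:R n) 0 / ((m ^ k)%N%:R * (k`!)%:R).
Proof.
rewrite /W /fdiff /affine_pow; congr (_ / _); apply: eq_bigr => i _.
by rewrite add0n natrD natrM signr_subn // -ltnS.
Qed.

Lemma W_small m r n k : (n < k)%N -> W m r n k = 0.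
Proof. by move=> n_lt_k; rewrite W_fdiff fdiff_affine_pow_small // mul0r. Qed.

Lemma Wz_Posz m r n (t : nat) : Wz m r n t = W m r n t.
Proof. by rewrite /=; case: leqP => // n_lt_t; rewrite W_small. Qed.

Lemma Wz_neg m r n (i : int) : i < 0 -> Wz m r n i = 0.
Proof. by case: i. Qed.

Lemma W_addn m r n h s : (0 < m)%N ->
  W m r (n + h) s =
  \sum_(j < s.+1) W m r h j *
    \sum_(k < n.+1) 'C(n, k)%:R * W m r k (s - j) * ((j * m)%N%:R) ^+ (n - k).
Proof.
move=> m_gt0.
rewrite W_fdiff (eq_fdiff _ _ _ _ (affine_powD _ _ n h)) fdiffM mulr_suml.
apply: eq_bigr => -[j /=]; rewrite ltnS => js _.
rewrite add0n (fdiff_affine_pow_shift _ _ _ n) mulr_sumr mulr_suml [RHS]mulr_sumr.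
apply: eq_bigr => k _.
have mX_neq0 t : (m ^ t)%N%:R != 0 :> rat by rewrite pnatr_eq0 -lt0n expn_gt0 m_gt0.
have fact_neq0 t : (t`!)%:R != 0 :> rat by rewrite pnatr_eq0 -lt0n fact_gt0.
have bin_neq0 : 'C(s, j)%:R != 0 :> rat by rewrite pnatr_eq0 -lt0n bin_gt0.
rewrite !W_fdiff -[X in _ / X]natrM (expn_fact_split m js) !natrM.
(* [field] treats [_ ^+ (n - k)] as an atom, so both bases must agree. *)
rewrite [m%:R * j%:R]mulrC.
by field; rewrite !mX_neq0 !fact_neq0 bin_neq0.
Qed.

Theorem mainTheorem6 (m n h r s : nat) (hm : (1 <= m)%N) (hs : (s <= n + h)%N) :
  W m r (n + h) s =
  \sum_(k < n.+1) \sum_(j < h.+1)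
    ('C(n, k))%:R * W m r h j * Wz m r k (s%:Z - j%:Z)
      * ((j * m)%N%:R) ^+ (n - k).
Proof.
pose G j := \sum_(k < n.+1)
  'C(n, k)%:R * W m r h j * Wz m r k (s%:Z - j%:Z) * ((j * m)%N%:R) ^+ (n - k).
have G_tail j : (minn s h < j)%N -> G j = 0.
  rewrite gtn_min => /orP[s_lt_j | h_lt_j]; apply: big1 => k _.
    by rewrite Wz_neg ?mulr0 ?mul0r // subr_lt0 ltz_nat.
  by rewrite W_small // mulr0 !mul0r.
rewrite exchange_big /= W_addn //.
transitivity (\sum_(j < s.+1) G j).
  apply: eq_bigr => -[j /=]; rewrite ltnS => js _; rewrite mulr_sumr.
  apply: eq_bigr => k _.
  by rewrite subzn // Wz_Posz; ring.
rewrite (sum_ord_vanishing_tail G _ G_tail) ?ltnS ?geq_minl //.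
by rewrite [RHS](sum_ord_vanishing_tail G _ G_tail) ?ltnS ?geq_minr.
Qed.
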